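(* Suppose the RB is stochastic monotone, i.e. satisfies: (D1) for each $a\in\{0,1\}$ and all $x<y$ in $\mathcal X$, $\sum_{w\ge z}P_{xw}(a)\le\sum_{w\ge z}P_{yw}(a)$ for every $z\in\mathcal X$; (D2) for every $z\in\mathcal X$, $S_{zx}(a):=\sum_{w\ge z}P_{xw}(a)$ is submodular in $(x,a)$; (D3) for each $a\in\{0,1\}$, $c(x,a)$ is non-decreasing in $x$; (D4) $c(x,a)$ is submodular in $(x,a)$. Then: 1. for every $\lambda\in\mathbb R$ there exists a threshold $\ell_\lambda\in\{0,\dots,|\mathcal X|\}$ such that the threshold policy $g^{(\ell_\lambda)}$ is optimal for minimizing $J^{(g)}_\lambda$ (if several such thresholds exist, $\ell_\lambda$ denotes the largest); 2. if, for every $x\in\mathcal X$, $N^{(g^{(\ell)})}(x)$ is non-increasing in $\ell$, then $\ell_\lambda$ is non-decreasing in $\lambda$; consequently the RB is indexable, its Whittle index $w(x)$ is non-decreasing in $x$, and for any $\ell\in\{0,\dots,|\mathcal X|-1\}$ the set $\{x: N^{(g^{(\ell)})}(x)\ne N^{(g^{(\ell+1)})}(x)\}$ is non-empty and for any $x$ in it, $w(\ell+1)=\dfrac{D^{(g^{(\ell+1)})}(x)-D^{(g^{(\ell)})}(x)}{N^{(g^{(\ell)})}(x)-N^{(g^{(\ell+1)})}(x)}$.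
   Context: A restless bandit (RB) has state space $\mathcal X=\{1,\dots,|\mathcal X|\}$ (totally ordered), actions $\{0,1\}$ (0 = passive, 1 = active, ordered $0<1$), transition matrices $P(0),P(1)$, cost $c:\mathcal X\times\{0,1\}\to\mathbb R$, discount factor $\beta\in(0,1)$. A function $f$ on a product of ordered sets is submodular if $f(x_1,y_2)-f(x_1,y_1)\ge f(x_2,y_2)-f(x_2,y_1)$ whenever $x_2\ge x_1$, $y_2\ge y_1$. For $\lambda\in\mathbb R$, $c_\lambda(x,a)=c(x,a)+\lambda a$. For a Markov policy $g$ (with $X_{t+1}$ drawn from $P_{X_t\,\cdot}(g(X_t))$): $J^{(g)}_\lambda(x)=(1-\beta)\mathbb E[\sum_{t\ge0}\beta^tc_\lambda(X_t,g(X_t))\mid X_0=x]$, $D^{(g)}(x)=(1-\beta)\mathbb E[\sum_{t\ge0}\beta^tc(X_t,g(X_t))\mid X_0=x]$, $N^{(g)}(x)=(1-\beta)\mathbb E[\sum_{t\ge0}\beta^tg(X_t)\mid X_0=x]$. For $\ell\in\{0,\dots,|\mathcal X|\}$, $g^{(\ell)}$ is passive at states $x\le\ell$ and active at states $x>\ell$. $V_\lambda$ is the fixed point of $V_\lambda(x)=\min\{H_\lambda(x,0),H_\lambda(x,1)\}$, $H_\lambda(x,a)=(1-\beta)c_\lambda(x,a)+\beta\sum_yP_{xy}(a)V_\lambda(y)$; $g_\lambda(x)=0$ iff $H_\lambda(x,0)<H_\lambda(x,1)$; $\Pi_\lambda=\{x:g_\lambda(x)=0\}$. Indexable: $\lambda'\le\lambda''\Rightarrow\Pi_{\lambda'}\subseteq\Pi_{\lambda''}$;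 Whittle index $w(x)=\inf\{\lambda:x\in\Pi_\lambda\}$. *)

From HB Require Import structures.
From mathcomp Require Import all_boot all_order all_algebra.
From mathcomp Require Import all_classical all_reals all_analysis.
Set Implicit Arguments. Unset Strict Implicit. Unset Printing Implicit Defensive.
Import Order.TTheory GRing.Theory Num.Theory numFieldNormedType.Exports.
Local Open Scope classical_set_scope.
Local Open Scope ring_scope.

(* States X = {1,...,n} are encoded 0-based as 'I_n (state x <-> index x-1);
   actions are bool (false = passive = 0, true = active = 1). *)
Section RB.
Variables (R : realType) (n : nat).
Implicit Types (P : bool -> 'M[R]_n) (c : 'I_n -> bool -> R) (g : 'I_n -> bool).

Definition stochastic P : Prop :=
  (forall a (x y : 'I_n), 0 <= P a x y) /\
  (forall a (x : 'I_n), \sum_(y < n) P a x y = 1).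

Definition submodular (f : 'I_n -> bool -> R) : Prop :=
  forall (x1 x2 : 'I_n) (a1 a2 : bool), (x1 <= x2)%N -> (a1 <= a2)%N ->
    f x1 a2 - f x1 a1 >= f x2 a2 - f x2 a1.

Definition tailP P (z x : 'I_n) (a : bool) : R :=
  \sum_(w < n | (z <= w)%N) P a x w.

Definition D1 P : Prop := forall a (x y z : 'I_n), (x < y)%N ->
  tailP P z x a <= tailP P z y a.
Definition D2 P : Prop := forall z : 'I_n, submodular (tailP P z).
Definition D3 c : Prop := forall a (x y : 'I_n), (x <= y)%N -> c x a <= c y a.
Definition D4 c : Prop := submodular c.

Definition Pg P g : 'M[R]_n := \matrix_(i, j) P (g i) i j.

(* discounted (normalized) expected total cost of per-step cost f under
   policy g started at x:
   (1-beta) * sum_t beta^t E[f(X_t, g(X_t)) | X_0 = x]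
   with E[f(X_t,g(X_t)) | X_0 = x] = ((Pg g)^t f_g)(x). *)
Definition disc P (beta : R) g (f : 'I_n -> bool -> R) (x : 'I_n) : R :=
  (1 - beta) * limn (series (fun t : nat =>
     beta ^+ t * (iter t (fun v : 'cV[R]_n => Pg P g *m v)
                         (\col_i f i (g i))) x ord0)).

Definition clam c (lam : R) (x : 'I_n) (a : bool) : R := c x a + lam * (a%:R).
Definition Jg P c beta lam g := disc P beta g (clam c lam).
Definition Dg P c beta g := disc P beta g c.
Definition Ng P beta g := disc P beta g (fun _ a => a%:R).

(* threshold policy g^(l): passive at states x <= l, i.e. at indices i < l *)
Definition thr (l : nat) : 'I_n -> bool := fun i => (l <= i)%N.

(* optimality among (stationary, deterministic) Markov policies *)
Definition optimal P c beta lam g : Prop :=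
  forall g' : 'I_n -> bool, forall x, Jg P c beta lam g x <= Jg P c beta lam g' x.

(* l_lambda: the largest optimal threshold (0 if none) *)
Definition ell P c beta lam : nat :=
  \max_(l < n.+1 | `[< optimal P c beta lam (thr l) >]) (l : nat).

Definition Hq P c beta lam (V : {ffun 'I_n -> R}) (x : 'I_n) (a : bool) : R :=
  (1 - beta) * clam c lam x a + beta * \sum_(y < n) P a x y * V y.
Definition bellman_fix P c beta lam (V : {ffun 'I_n -> R}) : Prop :=
  forall x, V x = Order.min (Hq P c beta lam V x false) (Hq P c beta lam V x true).
Definition Vlam P c beta lam : {ffun 'I_n -> R} :=
  xget [ffun _ => 0] [set V | bellman_fix P c beta lam V].

Definition Pi P c beta lam : set 'I_n :=
  [set x | Hq P c beta lam (Vlam P c beta lam) x false <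
           Hq P c beta lam (Vlam P c beta lam) x true].

Definition indexable P c beta : Prop :=
  forall lam1 lam2 : R, lam1 <= lam2 -> Pi P c beta lam1 `<=` Pi P c beta lam2.

Definition whittle P c beta (x : 'I_n) : R := inf [set lam | Pi P c beta lam x].

End RB.

(* The Bellman equation of the lambda-problem is solved by the cost of a policy
   minimising the total cost, and a policy is optimal iff it is greedy for the
   value V_lambda.  By Abel summation, D1 and D3 make V_lambda nondecreasing, and
   then D2 and D4 make the advantage of activity
   A_lambda(x) = Q_lambda(x, 1) - Q_lambda(x, 0) nonincreasing in x, so being
   passive where A_lambda >= 0 is an optimal threshold policy.  The cost
   J_lambda = D + lambda N of a fixed policy is affine in lambda; when N
   decreases along thresholds, two optimal thresholds for lambda <= mu can be
   exchanged, which gives the monotonicity of l_lambda and indexability.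
   Finally A_lambda(x) is Lipschitz in lambda and tends to -oo and +oo, so it
   vanishes at lambda = w(x); there thr x and thr (x + 1) are both optimal, and
   equating their costs D + w N yields the formula for w. *)

From HB Require Import structures.
From mathcomp Require Import all_boot all_order all_algebra.
From mathcomp Require Import all_classical all_reals all_analysis.
From mathcomp Require Import ring lra.

Set Implicit Arguments.
Unset Strict Implicit.
Unset Printing Implicit Defensive.
Import Order.TTheory GRing.Theory Num.Theory numFieldNormedType.Exports.
Local Open Scope classical_set_scope.
Local Open Scope ring_scope.

Lemma cvg_geometric_error (R : realType) (beta B l : R) (s : R^nat) :
  0 <= beta < 1 -> (forall t, `|l - s t| <= B * beta ^+ t) -> s @ \oo --> l.
Proof.
move=> /andP[beta_ge0 beta_lt1] err; apply/cvgrPdist_le => e e_gt0.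
have B1_gt0 : 0 < `|B| + 1 by rewrite ltr_wpDl.
have beta_norm_lt1 : `|beta| < 1 by rewrite ger0_norm.
have /cvgrPdist_le /(_ (e / (`|B| + 1)) (divr_gt0 e_gt0 B1_gt0)) :=
  cvg_expr beta_norm_lt1.
apply: filterS => t; rewrite sub0r normrN ger0_norm ?exprn_ge0 // => small.
apply: le_trans (err t) _; have bt_ge0 : 0 <= beta ^+ t by rewrite exprn_ge0.
apply: (@le_trans _ _ ((`|B| + 1) * beta ^+ t)).
  by apply: ler_wpM2r => //; rewrite (le_trans (ler_norm B)) ?lerDl.
by rewrite -ler_pdivlMl // mulrC.
Qed.

Lemma norm_convex_le (R : realFieldType) (t a b K : R) :
  0 <= t <= 1 -> `|a| <= K -> `|b| <= K -> `|(1 - t) * a + t * b| <= K.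
Proof.
move=> /andP[t_ge0 t_le1] ha hb; apply: le_trans (ler_normD _ _) _.
have t1_ge0 : 0 <= 1 - t by rewrite subr_ge0.
rewrite !normrM (ger0_norm t_ge0) (ger0_norm t1_ge0).
have -> : K = (1 - t) * K + t * K by ring.
by apply: lerD; apply: ler_wpM2l.
Qed.

Lemma lipschitz_inf_root (R : realType) (f : R -> R) (K : R) :
  0 < K -> (forall a b, f a <= f b + K * `|a - b|) ->
  [set a | 0 < f a] !=set0 -> has_lbound [set a | 0 < f a] ->
  f (inf [set a | 0 < f a]) = 0.
Proof.
set S := [set a | 0 < f a] => K_gt0 lip S0 Slb; set w := inf S.
apply/eqP; rewrite eq_le; apply/andP; split; apply/ler_addgt0Pr => e e_gt0.
- have eK_gt0 : 0 < e / K by rewrite divr_gt0.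
  have below : f (w - e / K) <= 0.
    rewrite leNgt; apply/negP => Sw; have := ge_inf Slb Sw; rewrite -/w; lra.
  apply: le_trans (lip w (w - e / K)) _.
  have -> : w - (w - e / K) = e / K by ring.
  rewrite ger0_norm ?(ltW eK_gt0) // mulrCA divff ?gt_eqF // mulr1; lra.
- have [a Sa a_lt] := inf_adherent (divr_gt0 e_gt0 K_gt0) (conj S0 Slb).
  have a_ge : w <= a := ge_inf Slb Sa.
  apply: le_trans (ltW Sa) _; apply: le_trans (lip a w) _.
  rewrite lerD2l ger0_norm ?subr_ge0 // -ler_pdivlMl // mulrC; lra.
Qed.

Lemma bigmax_succ_downward n (p : pred 'I_n) :
  (forall x y : 'I_n, (x <= y)%N -> p y -> p x) ->
  forall y : 'I_n, (y < \max_(i | p i) i.+1)%N = p y.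
Proof.
move=> down y; apply/idP/idP => [|py].
  2: exact: (leq_bigmax_cond (F := fun i : 'I_n => i.+1)).
apply: contraLR => npy; rewrite -leqNgt; apply/bigmax_leqP => i pi.
by rewrite ltnNge; apply: contra npy => /down; apply.
Qed.

Lemma sum_tail_lift (R : nmodType) n (r : 'I_n.+1 -> R) (z : 'I_n) :
  \sum_(w < n.+1 | (lift ord0 z <= w)%N) r w =
  \sum_(w < n | (z <= w)%N) r (lift ord0 w).
Proof.
rewrite big_mkcond big_ord_recl /= add0r [RHS]big_mkcond.
by apply: eq_bigr => i _; rewrite /= /bump /= !add1n ltnS.
Qed.

Lemma sum_mul_nondecr_ge0 (R : realDomainType) n (r W : 'I_n -> R) :
  {homo W : x y / (x <= y)%N >-> x <= y} ->
  (forall z : 'I_n, 0 <= \sum_(w < n | (z <= w)%N) r w) ->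
  (forall y, 0 <= W y) -> 0 <= \sum_(w < n) r w * W w.
Proof.
elim: n r W => [|n IH] r W W_mono tail_ge0 W_ge0; first by rewrite big_ord0.
pose r' (i : 'I_n) := r (lift ord0 i).
pose W' (i : 'I_n) := W (lift ord0 i) - W ord0.
have lift_mono (x y : 'I_n) : (x <= y)%N -> (lift ord0 x <= lift ord0 y)%N.
  by rewrite /= /bump /= !add1n ltnS.
have split_sum : \sum_(w < n.+1) r w * W w =
    (r ord0 + \sum_(i < n) r' i) * W ord0 + \sum_(i < n) r' i * W' i.
  rewrite big_ord_recl mulrDl -addrA mulr_suml -big_split; congr (_ + _).
  by apply: eq_bigr => i _; rewrite /r' /W' /= -mulrDr addrC subrK.
rewrite split_sum; apply: addr_ge0.
  apply: mulr_ge0 => //; have := tail_ge0 ord0.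
  by rewrite big_mkcond big_ord_recl.
apply: IH => [x y /lift_mono/W_mono|z|y]; rewrite ?lerD2r //.
  by rewrite /r' -sum_tail_lift.
by rewrite subr_ge0; apply: W_mono.
Qed.

Lemma sum0_mul_nondecr_ge0 (R : realDomainType) n (r W : 'I_n -> R) :
  {homo W : x y / (x <= y)%N >-> x <= y} ->
  (forall z : 'I_n, 0 <= \sum_(w < n | (z <= w)%N) r w) ->
  \sum_(w < n) r w = 0 -> 0 <= \sum_(w < n) r w * W w.
Proof.
case: n r W => [|n] r W W_mono tail_ge0 sum0; first by rewrite big_ord0.
have shift : \sum_(w < n.+1) r w * (W w - W ord0) = \sum_(w < n.+1) r w * W w.
  by under eq_bigr do rewrite mulrBr; rewrite sumrB -mulr_suml sum0 mul0r subr0.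
rewrite -shift; apply: sum_mul_nondecr_ge0 => // [x y /W_mono|y].
  by rewrite lerD2r.
by rewrite subr_ge0 W_mono.
Qed.

Section DiscountedMDP.
Variables (R : realType) (n : nat) (P : bool -> 'M[R]_n) (beta : R).
Hypotheses (beta_gt0 : 0 < beta) (beta_lt1 : beta < 1).
Hypotheses (P_ge0 : forall a x y, 0 <= P a x y)
           (P_sum1 : forall a x, \sum_(y < n) P a x y = 1).

Let beta_ge0 : 0 <= beta. Proof. exact: ltW. Qed.
Let beta1_gt0 : 0 < 1 - beta. Proof. by rewrite subr_gt0. Qed.
Let beta1_ge0 : 0 <= 1 - beta. Proof. exact: ltW. Qed.

Definition expect a x (u : 'I_n -> R) := \sum_(y < n) P a x y * u y.

Lemma expectD a x u v : expect a x (fun y => u y + v y) = expect a x u + expect a x v.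
Proof. by rewrite /expect -big_split; apply: eq_bigr => y _; rewrite mulrDr. Qed.

Lemma expectB a x u v : expect a x (fun y => u y - v y) = expect a x u - expect a x v.
Proof. by rewrite /expect -sumrB; apply: eq_bigr => y _; rewrite mulrBr. Qed.

Lemma expectZ a x k u : expect a x (fun y => k * u y) = k * expect a x u.
Proof. by rewrite /expect mulr_sumr; apply: eq_bigr => y _; rewrite mulrCA. Qed.

Lemma expect_cst a x k : expect a x (fun _ => k) = k.
Proof. by rewrite /expect -big_distrl /= P_sum1 mul1r. Qed.

Lemma eq_expect a x u v : u =1 v -> expect a x u = expect a x v.
Proof. by move=> uv; apply: eq_bigr => y _; rewrite uv. Qed.

Lemma ler_expect a x u v : (forall y, u y <= v y) -> expect a x u <= expect a x v.
Proof. by move=> uv; apply: ler_sum => y _; apply: ler_wpM2l. Qed.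

Lemma expect_ge a x u m : (forall y, m <= u y) -> m <= expect a x u.
Proof. by move=> um; rewrite -(expect_cst a x m); apply: ler_expect. Qed.

Lemma expect_le a x u m : (forall y, u y <= m) -> expect a x u <= m.
Proof. by move=> um; rewrite -(expect_cst a x m); apply: ler_expect. Qed.

(* At a minimiser x0 of F - G the hypothesis gives beta * min <= min, so min >= 0. *)
Lemma discounted_min_principle (F G : 'I_n -> R) :
  (forall x, exists a, beta * expect a x (fun y => F y - G y) <= F x - G x) ->
  forall x, G x <= F x.
Proof.
move=> super x; rewrite -subr_ge0.
have [x0 _ x0_min] := @arg_minP _ R _ x xpredT (fun y => F y - G y) isT.
set m := F x0 - G x0 in x0_min *; apply: le_trans (x0_min x isT).
have [a ha] := super x0.
have : beta * m <= m.
  apply: le_trans ha; apply: ler_wpM2l => //.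
  by apply: expect_ge => y; apply: x0_min.
rewrite -subr_ge0 -[X in X - _]mul1r -mulrBl.
by rewrite pmulr_rge0.
Qed.

Definition policy_fixpoint g (f : 'I_n -> bool -> R) (u : 'I_n -> R) :=
  forall x, u x = (1 - beta) * f x (g x) + beta * expect (g x) x u.

Lemma policy_fixpoint_unique g f u v :
  policy_fixpoint g f u -> policy_fixpoint g f v -> u =1 v.
Proof.
move=> hu hv x; apply/eqP; rewrite eq_le.
by apply/andP; split; apply: discounted_min_principle => y;
  exists (g y); rewrite expectB (hu y) (hv y); lra.
Qed.

Lemma unitmx_resolvent g : 1%:M - beta *: Pg P g \in unitmx.
Proof.
set A := 1%:M - beta *: Pg P g.
rewrite -unitmx_tr -row_free_unit -kermx_eq0; apply/eqP/row_matrixP => i.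
rewrite row0; set v := row i (kermx A^T).
have Au0 : A *m v^T = 0.
  by rewrite -[A]trmxK -trmx_mul /v -row_mul mulmx_ker row0 trmx0.
have fix_u : policy_fixpoint g (fun _ _ => 0) (fun y => v^T y 0).
  move=> x; rewrite mulr0 add0r; move/eqP: Au0.
  rewrite /A mulmxBl mul1mx -scalemxAl subr_eq0 => /eqP /matrixP /(_ x 0).
  by rewrite !mxE => ->; congr (_ * _); apply: eq_bigr => y _; rewrite mxE.
have fix_0 : policy_fixpoint g (fun _ _ => 0) (fun _ => 0).
  by move=> x; rewrite expect_cst; ring.
apply/rowP => j; have := policy_fixpoint_unique fix_u fix_0 j.
by rewrite !mxE.
Qed.

Definition step g (v : 'cV[R]_n) := Pg P g *m v.

Lemma iter_stepD g t (u v : 'cV[R]_n) k :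
  iter t (step g) (u + k *: v) = iter t (step g) u + k *: iter t (step g) v.
Proof. by elim: t => [//|t IH]; rewrite !iterS IH /step mulmxDr scalemxAr. Qed.

Lemma step_entry g (v : 'cV[R]_n) x : step g v x 0 = expect (g x) x (fun y => v y 0).
Proof. by rewrite /step mxE; apply: eq_bigr => y _; rewrite mxE. Qed.

Lemma iter_step_bounded g t (v : 'cV[R]_n) B :
  (forall y, `|v y 0| <= B) -> forall x, `|iter t (step g) v x 0| <= B.
Proof.
move=> v_le; elim: t => [//|t IH] x.
rewrite iterS step_entry; apply: le_trans (ler_norm_sum _ _ _) _.
rewrite -(expect_cst (g x) x B); apply: ler_sum => y _.
by rewrite normrM ger0_norm //; apply: ler_wpM2l.
Qed.

Lemma resolvent_fix g (v : 'cV[R]_n) :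
  let w := invmx (1%:M - beta *: Pg P g) *m v in w = v + beta *: step g w.
Proof.
move=> w; have Aw : (1%:M - beta *: Pg P g) *m w = v.
  by rewrite /w mulKVmx //; apply: unitmx_resolvent.
by rewrite -{1}Aw mulmxBl mul1mx -scalemxAl /step subrK.
Qed.

Lemma disc_resolvent g f x :
  disc P beta g f x =
  (1 - beta) * (invmx (1%:M - beta *: Pg P g) *m \col_i f i (g i)) x 0.
Proof.
set A := 1%:M - beta *: Pg P g; set fg := \col_i f i (g i).
have w_fix := resolvent_fix g fg; set w := invmx A *m fg in w_fix *.
have w_partial t : w = \sum_(s < t) beta ^+ s *: iter s (step g) fg
                       + beta ^+ t *: iter t (step g) w.
  elim: t => [|t IH]; first by rewrite big_ord0 expr0 scale1r add0r.
  rewrite big_ord_recr /= {1}IH {1}w_fix iter_stepD -iterSr scalerDr scalerA.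
  by rewrite -exprSr addrA.
congr (_ * _); apply: cvg_lim; first exact: Rhausdorff.
apply: (@cvg_geometric_error _ beta (\sum_(y < n) `|w y 0|)); first by rewrite beta_ge0.
move=> t; rewrite /series /= big_mkord.
have -> : \sum_(s < t) beta ^+ s * iter s (step g) fg x 0
   = (\sum_(s < t) beta ^+ s *: iter s (step g) fg) x 0.
  by rewrite summxE; apply: eq_bigr => s _; rewrite mxE.
rewrite {1}(w_partial t) mxE [X in `|_ + X - _|]mxE addrAC subrr add0r.
rewrite normrM ger0_norm ?exprn_ge0 // mulrC.
apply: ler_wpM2r; first by rewrite exprn_ge0.
by apply: iter_step_bounded => y; rewrite (bigD1 y) //= lerDl sumr_ge0.
Qed.

Lemma disc_fixpoint g f : policy_fixpoint g f (disc P beta g f).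
Proof.
have w_fix := resolvent_fix g (\col_i f i (g i)).
set w := invmx _ *m _ in w_fix *.
move=> x; rewrite (eq_expect _ _ (disc_resolvent g f)) expectZ disc_resolvent -/w.
rewrite {1}w_fix !mxE /expect; under eq_bigr do rewrite mxE.
ring.
Qed.

Lemma disc_ge0 g f : (forall x a, 0 <= f x a) -> forall x, 0 <= disc P beta g f x.
Proof.
move=> f_ge0; apply: (@discounted_min_principle _ (fun=> 0)) => x; exists (g x).
rewrite !subr0 (eq_expect _ _ (fun y => subr0 _)) [leRHS]disc_fixpoint lerDr.
by rewrite mulr_ge0.
Qed.

Section Bellman.
Variables (c : 'I_n -> bool -> R) (lam : R).

Definition qval (V : 'I_n -> R) x a :=
  (1 - beta) * clam c lam x a + beta * expect a x V.

Lemma ler_qval U W x a : (forall y, U y <= W y) -> qval U x a <= qval W x a.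
Proof. by move=> UW; rewrite lerD2l ler_wpM2l // ler_expect. Qed.

Lemma bellman_comparison (W U : 'I_n -> R) :
  (forall x, exists a, qval W x a <= W x) ->
  (forall x a, U x <= qval U x a) -> forall x, U x <= W x.
Proof.
move=> W_super U_sub; apply: discounted_min_principle => x.
have [a Wa] := W_super x; exists a.
by have := U_sub x a; move: Wa; rewrite /qval expectB; lra.
Qed.

Lemma Jg_fixpoint g x : Jg P c beta lam g x = qval (Jg P c beta lam g) x (g x).
Proof. exact: disc_fixpoint. Qed.

Lemma Jg_le g (W : 'I_n -> R) :
  (forall x, qval W x (g x) <= W x) -> forall x, Jg P c beta lam g x <= W x.
Proof.
move=> W_super; apply: discounted_min_principle => x; exists (g x).
by have := Jg_fixpoint g x; have := W_super x; rewrite /qval expectB; lra.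
Qed.

Lemma Jg_ge g (W : 'I_n -> R) :
  (forall x, W x <= qval W x (g x)) -> forall x, W x <= Jg P c beta lam g x.
Proof.
move=> W_sub; apply: discounted_min_principle => x; exists (g x).
by have := Jg_fixpoint g x; have := W_sub x; rewrite /qval expectB; lra.
Qed.

Lemma qvalE (V : {ffun 'I_n -> R}) x a : Hq P c beta lam V x a = qval V x a.
Proof. by []. Qed.

(* Policy improvement: a policy minimising the sum of its costs admits no
   strict one-state improvement, so its cost solves the Bellman equation. *)
Lemma bellman_fix_exists : exists V, bellman_fix P c beta lam V.
Proof.
pose total (h : {ffun 'I_n -> bool}) := \sum_(x < n) Jg P c beta lam h x.
have [g0 _ g0_min] := @arg_minP _ R _ [ffun _ => false] xpredT total isT.
set J0 := Jg P c beta lam g0.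
have J0_le x a : J0 x <= qval J0 x a.
  rewrite leNgt; apply/negP => improve.
  pose g1 := [ffun y => if y == x then a else g0 y]; set J1 := Jg P c beta lam g1.
  have J1_le : forall y, J1 y <= J0 y.
    apply: Jg_le => y; rewrite /g1 ffunE; case: eqVneq => [->|_]; first exact: ltW.
    by rewrite {2}/J0 Jg_fixpoint.
  have J1_lt : J1 x < J0 x.
    rewrite /J1 Jg_fixpoint /g1 ffunE eqxx; apply: le_lt_trans improve.
    exact: ler_qval.
  have := g0_min g1 isT; rewrite /total (bigD1 x) //= [leRHS](bigD1 x) //= leNgt.
  by move/negP; apply; apply: ltr_leD => //; apply: ler_sum => y _.
exists [ffun x => J0 x] => x.
have qJ0 a : qval [ffun y => J0 y] x a = qval J0 x a.
  by rewrite /qval (@eq_expect a x _ J0) // => y; rewrite ffunE.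
rewrite ffunE !qvalE !qJ0; apply/eqP; rewrite eq_le le_min !J0_le /=.
rewrite ge_min {2 4}/J0 (Jg_fixpoint g0 x) -/J0.
by case: (g0 x); rewrite lexx ?orbT.
Qed.

Definition value : 'I_n -> R := Vlam P c beta lam.

Lemma value_bellman : bellman_fix P c beta lam (Vlam P c beta lam).
Proof.
have [V hV] := bellman_fix_exists.
by apply: (@xgetPex _ _ [set V | bellman_fix P c beta lam V]); exists V.
Qed.

Lemma value_le_qval x a : value x <= qval value x a.
Proof. by rewrite /value value_bellman; case: a; rewrite ge_min lexx ?orbT. Qed.

Lemma exists_qval_le_value x : exists a, qval value x a <= value x.
Proof.
rewrite /value value_bellman !qvalE.
by case: leP => _; [exists false | exists true].
Qed.

Lemma value_le_Jg g x : value x <= Jg P c beta lam g x.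
Proof. by apply: Jg_ge => y; apply: value_le_qval. Qed.

Definition greedy (g : 'I_n -> bool) :=
  forall x, qval value x (g x) <= qval value x (~~ g x).

Lemma greedy_Jg g : greedy g -> forall x, Jg P c beta lam g x = value x.
Proof.
move=> g_greedy x; apply/eqP; rewrite eq_le value_le_Jg andbT.
apply: Jg_le => y; have [a ha] := exists_qval_le_value y.
by move: (g_greedy y); case: (g y) => /= ga; case: a ha => // ha; apply: le_trans ga ha.
Qed.

Lemma greedy_optimal g : greedy g -> optimal P c beta lam g.
Proof. by move=> g_greedy g' x; rewrite greedy_Jg //; apply: value_le_Jg. Qed.

Lemma optimal_Jg g : optimal P c beta lam g -> forall x, Jg P c beta lam g x = value x.
Proof.
move=> g_opt x; pose gs y := qval value y true < qval value y false.
have gs_greedy : greedy gs by move=> y; rewrite /gs; case: ltP => //= /ltW.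
apply/eqP; rewrite eq_le value_le_Jg andbT -(greedy_Jg gs_greedy x).
exact: g_opt.
Qed.

Lemma optimal_greedy g : optimal P c beta lam g -> greedy g.
Proof.
move=> g_opt x; have Jg_value := optimal_Jg g_opt.
have -> : qval value x (g x) = value x.
  by rewrite -Jg_value Jg_fixpoint /qval (eq_expect _ _ Jg_value).
exact: value_le_qval.
Qed.

Definition advantage x := qval value x true - qval value x false.

Lemma advantageE x : advantage x =
  (1 - beta) * (c x true - c x false + lam) +
  beta * (expect true x value - expect false x value).
Proof. by rewrite /advantage /qval /clam /=; ring. Qed.

Lemma optimal_thrP L : optimal P c beta lam (thr L) <->
  (forall y : 'I_n, (y < L)%N -> 0 <= advantage y) /\
  (forall y : 'I_n, (L <= y)%N -> advantage y <= 0).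
Proof.
rewrite /advantage; split => [/optimal_greedy thr_greedy | [below above]].
  split=> y y_L; have := thr_greedy y; rewrite /thr.
    by rewrite leqNgt y_L subr_ge0.
  by rewrite y_L subr_le0.
apply: greedy_optimal => y; rewrite /thr; case: leqP => [L_y | y_L] /=.
  by have := above y L_y; rewrite subr_le0.
by have := below y y_L; rewrite subr_ge0.
Qed.

End Bellman.

Lemma Jg_affine c lam g x :
  Jg P c beta lam g x = Dg P c beta g x + lam * Ng P beta g x.
Proof.
pose affine y := Dg P c beta g y + lam * Ng P beta g y.
apply: (@policy_fixpoint_unique g (clam c lam) _ affine (disc_fixpoint _ _)) => y.
rewrite /affine /Dg /Ng (disc_fixpoint g c y) (disc_fixpoint g (fun _ a => a%:R) y).
by rewrite expectD expectZ /clam; ring.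
Qed.

(* Since J_lambda = D + lambda N, raising lambda favours the policy with the
   smaller activity N. *)
Lemma optimal_exchange c lam mu g h :
  lam <= mu -> (forall x, Ng P beta h x <= Ng P beta g x) ->
  optimal P c beta lam h -> optimal P c beta mu g ->
  optimal P c beta mu h /\ optimal P c beta lam g.
Proof.
move=> lam_mu Nhg h_opt g_opt.
have dN x : (mu - lam) * Ng P beta h x <= (mu - lam) * Ng P beta g x.
  by rewrite ler_wpM2l ?subr_ge0.
split=> g' x.
  apply: le_trans (g_opt g' x); have := h_opt g x; have := dN x.
  by rewrite !Jg_affine !mulrBl; lra.
apply: le_trans (h_opt g' x); have := g_opt h x; have := dN x.
by rewrite !Jg_affine !mulrBl; lra.
Qed.

Lemma ell_max c lam l : (l <= n)%N -> optimal P c beta lam (thr l) ->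
  (l <= ell P c beta lam)%N.
Proof.
rewrite -ltnS => l_le_n l_opt.
apply: (@leq_bigmax_cond _ _ (fun i : 'I_n.+1 => nat_of_ord i) (Ordinal l_le_n)).
exact/asboolP.
Qed.

Lemma ell_le_n c lam : (ell P c beta lam <= n)%N.
Proof. by apply/bigmax_leqP => i _; rewrite -ltnS. Qed.

Lemma Pi_advantage c lam x : Pi P c beta lam x <-> 0 < advantage c lam x.
Proof. by rewrite /Pi /advantage /= subr_gt0. Qed.

Definition cost_bound (c : 'I_n -> bool -> R) := \sum_(x < n) \sum_(a : bool) `|c x a|.

Lemma norm_cost_le c x a : `|c x a| <= cost_bound c.
Proof.
rewrite /cost_bound (bigD1 x) //= (bigD1 a) //= -addrA lerDl.
by apply: addr_ge0; apply: sumr_ge0 => *; rewrite ?sumr_ge0.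
Qed.

Lemma value_le_cst c lam k : (forall x, exists a, clam c lam x a <= k) ->
  forall x, value c lam x <= k.
Proof.
move=> clam_le; apply: (@bellman_comparison c lam (fun=> k)) => [x|x a].
  2: exact: value_le_qval.
have [a ha] := clam_le x; exists a; rewrite /qval expect_cst.
by have := ler_wpM2l beta1_ge0 ha; lra.
Qed.

Lemma value_ge_cst c lam k : (forall x a, k <= clam c lam x a) ->
  forall x, k <= value c lam x.
Proof.
move=> clam_ge; apply: (@bellman_comparison c lam _ (fun=> k)) => [x|x a].
  exact: exists_qval_le_value.
by rewrite /qval expect_cst; have := ler_wpM2l beta1_ge0 (clam_ge x a); lra.
Qed.

Lemma value_lipschitz c lam mu x : value c lam x <= value c mu x + `|lam - mu|.
Proof.
apply: (@bellman_comparison c lam (fun y => value c mu y + `|lam - mu|)) => [y|y a].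
  2: exact: value_le_qval.
have [a ha] := exists_qval_le_value c mu y; exists a.
have clam_le : clam c lam y a <= clam c mu y a + `|lam - mu|.
  rewrite /clam -addrA lerD2l; case: a {ha} => /=.
    by rewrite !mulr1 -lerBlDl ler_norm.
  by rewrite !mulr0 add0r.
have := ler_wpM2l beta1_ge0 clam_le; move: ha; rewrite /qval expectD expect_cst; lra.
Qed.

Lemma advantage_lipschitz c lam mu x :
  advantage c lam x <= advantage c mu x + 2 * `|lam - mu|.
Proof.
have shift a l m : expect a x (value c l) <= expect a x (value c m) + `|l - m|.
  rewrite -(expect_cst a x `|l - m|) -expectD ler_expect // => y.
  exact: value_lipschitz.
have E1 := ler_wpM2l beta_ge0 (shift true lam mu).
have E0 := ler_wpM2l beta_ge0 (shift false mu lam); rewrite distrC in E0.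
have dlam := ler_wpM2l beta1_ge0 (ler_norm (lam - mu)).
have beta_d : beta * `|lam - mu| <= `|lam - mu| by rewrite ler_piMl // ltW.
by rewrite !advantageE; lra.
Qed.

(* V_lambda lies within the cost bound of min(0, lambda), the activity charge of
   the cheaper of "always passive" and "always active". *)
Lemma advantage_bound c lam x :
  `|advantage c lam x - (1 - beta) * lam| <= 2 * cost_bound c.
Proof.
set B := cost_bound c; set m := Num.min 0 lam.
have c_le y a : - B <= c y a <= B by rewrite -ler_norml norm_cost_le.
have value_le : forall y, value c lam y <= m + B.
  apply: value_le_cst => y; rewrite /m /clam.
  case: leP => _.
    by exists false; rewrite mulr0 addr0 add0r; case/andP: (c_le y false).
  by exists true; rewrite mulr1 addrC lerD2l; case/andP: (c_le y true).
have value_ge : forall y, m - B <= value c lam y.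
  apply: value_ge_cst => y a; rewrite /clam [leRHS]addrC.
  apply: lerD; last by case/andP: (c_le y a).
  by case: a; rewrite /m ?mulr1 ?mulr0 ge_min lexx ?orbT.
have -> : advantage c lam x - (1 - beta) * lam = (1 - beta) * (c x true - c x false) +
    beta * (expect true x (value c lam) - expect false x (value c lam)).
  by rewrite advantageE; ring.
apply: norm_convex_le; first by rewrite beta_ge0 ltW.
  by apply: le_trans (ler_normB _ _) _; rewrite mulr2n mulrDl mul1r lerD ?norm_cost_le.
have E1 := expect_le true x value_le; have E1' := expect_ge true x value_ge.
have E0 := expect_le false x value_le; have E0' := expect_ge false x value_ge.
by rewrite ler_norml; apply/andP; split; lra.
Qed.

Lemma whittleE c x : whittle P c beta x = inf [set lam | 0 < advantage c lam x].
Proof. by rewrite /whittle; congr inf; rewrite predeqE => lam; apply: Pi_advantage. Qed.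

Lemma has_inf_advantage_pos c x : has_inf [set lam | 0 < advantage c lam x].
Proof.
split.
- set lam := (2 * cost_bound c + 1) / (1 - beta); exists lam => /=.
  have lamE : (1 - beta) * lam = 2 * cost_bound c + 1.
    by rewrite /lam mulrCA divff ?gt_eqF // mulr1.
  by have := advantage_bound c lam x; rewrite lamE ler_norml; lra.
- exists (- (2 * cost_bound c) / (1 - beta)) => lam /= adv_gt0.
  have := advantage_bound c lam x.
  rewrite ler_pdivrMr // mulrC ler_norml; lra.
Qed.

Lemma advantage_whittle c x : advantage c (whittle P c beta x) x = 0.
Proof.
have [pos0 pos_lb] := has_inf_advantage_pos c x.
rewrite whittleE; apply: (@lipschitz_inf_root _ (advantage c^~ x) 2) => // lam mu.
exact: advantage_lipschitz.
Qed.

Section Monotone.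
Hypotheses (P_D1 : D1 P) (P_D2 : D2 P).

Lemma expect_mono a (x y : 'I_n) (u : 'I_n -> R) : (x <= y)%N ->
  {homo u : z w / (z <= w)%N >-> z <= w} -> expect a x u <= expect a y u.
Proof.
rewrite leq_eqVlt => /orP[/eqP/val_inj -> // | x_lt_y] u_mono.
rewrite -subr_ge0 /expect -sumrB; under eq_bigr do rewrite -mulrBl.
apply: sum0_mul_nondecr_ge0 => [z w /u_mono //|z|]; last by rewrite sumrB !P_sum1 subrr.
by rewrite sumrB subr_ge0; apply: P_D1.
Qed.

Lemma expect_gain_antitone (x y : 'I_n) (u : 'I_n -> R) : (x <= y)%N ->
  {homo u : z w / (z <= w)%N >-> z <= w} ->
  expect true y u - expect false y u <= expect true x u - expect false x u.
Proof.
move=> x_le_y u_mono; rewrite -subr_ge0 /expect -!sumrB.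
under eq_bigr do rewrite -!mulrBl.
apply: sum0_mul_nondecr_ge0 => [z w /u_mono //|z|].
  2: by rewrite !sumrB !P_sum1 !subrr.
by rewrite !sumrB subr_ge0; apply: P_D2.
Qed.

Section Cost.
Variable c : 'I_n -> bool -> R.
Hypotheses (c_D3 : D3 c) (c_D4 : D4 c).

Lemma qval_mono lam (W : 'I_n -> R) (x y : 'I_n) a : (x <= y)%N ->
  {homo W : z w / (z <= w)%N >-> z <= w} -> qval c lam W x a <= qval c lam W y a.
Proof.
move=> x_le_y W_mono; apply: lerD.
  by rewrite ler_wpM2l // /clam lerD2r; apply: c_D3.
by rewrite ler_wpM2l // expect_mono.
Qed.

(* The upper envelope y |-> min_{z >= y} V z is a nondecreasing supersolution
   of the Bellman equation below V, hence equal to V. *)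
Lemma value_mono lam : {homo value c lam : x y / (x <= y)%N >-> x <= y}.
Proof.
set V := value c lam.
pose up (x : 'I_n) := [arg min_(y < x | (x <= y)%N) V y]%O.
have upP (x : 'I_n) : (x <= up x)%N /\ forall y : 'I_n, (x <= y)%N -> V (up x) <= V y.
  by rewrite /up; case: arg_minP => //= i x_i i_min.
pose Vup x := V (up x).
have Vup_mono : {homo Vup : x y / (x <= y)%N >-> x <= y}.
  by move=> x y x_y; apply: (upP x).2; apply: leq_trans x_y (upP y).1.
have Vup_le x : Vup x <= V x by apply: (upP x).2.
have V_le : forall x, V x <= Vup x.
  apply: bellman_comparison => [x|x a]; last exact: value_le_qval.
  have [a ha] := exists_qval_le_value c lam (up x); exists a.
  apply: le_trans ha; apply: le_trans (ler_qval _ _ _ _ Vup_le).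
  exact: qval_mono (upP x).1 Vup_mono.
by move=> x y x_y; apply: le_trans (V_le x) (le_trans (Vup_mono _ _ x_y) (Vup_le y)).
Qed.

Lemma advantage_antitone lam (x y : 'I_n) : (x <= y)%N ->
  advantage c lam y <= advantage c lam x.
Proof.
move=> x_le_y; rewrite !advantageE; apply: lerD.
  by rewrite ler_wpM2l // lerD2r; apply: c_D4.
by rewrite ler_wpM2l // expect_gain_antitone //; apply: value_mono.
Qed.

Lemma exists_optimal_thr lam : exists L, [/\ (L <= n)%N,
  optimal P c beta lam (thr L) & forall y : 'I_n, (y < L)%N = (0 < advantage c lam y)].
Proof.
pose pos := [pred y : 'I_n | 0 < advantage c lam y].
have pos_down (x y : 'I_n) : (x <= y)%N -> pos y -> pos x.
  by rewrite !inE => x_y /lt_le_trans; apply; apply: advantage_antitone.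
have L_pos := bigmax_succ_downward pos_down.
exists (\max_(i | pos i) i.+1); split => //; first by apply/bigmax_leqP.
apply/optimal_thrP; split=> y.
  by rewrite L_pos => /ltW.
by rewrite leqNgt L_pos -leNgt.
Qed.

Lemma ell_optimal lam : optimal P c beta lam (thr (ell P c beta lam)).
Proof.
have [L [L_le_n L_opt _]] := exists_optimal_thr lam.
pose opt := [pred l : 'I_n.+1 | `[< optimal P c beta lam (thr l) >]].
have opt_gt0 : (0 < #|opt|)%N.
  by apply/card_gt0P; exists (Ordinal (L_le_n : (L < n.+1)%N)); rewrite inE.
have [l0 l0_opt l0_max] := @eq_bigmax_cond _ opt (fun l => nat_of_ord l) opt_gt0.
have -> : ell P c beta lam = l0 by rewrite -l0_max; apply: eq_bigl => i; rewrite inE.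
by move: l0_opt; rewrite inE.
Qed.

Lemma whittle_mono (x y : 'I_n) : (x <= y)%N ->
  whittle P c beta x <= whittle P c beta y.
Proof.
move=> x_le_y; have [_ pos_x_lb] := has_inf_advantage_pos c x.
rewrite !whittleE; apply: lb_le_inf => [|lam /= pos_y].
  exact: (has_inf_advantage_pos c y).1.
by apply: (ge_inf pos_x_lb); apply: lt_le_trans pos_y (advantage_antitone _ x_le_y).
Qed.

Lemma whittle_optimal (l : 'I_n) :
  optimal P c beta (whittle P c beta l) (thr l) /\
  optimal P c beta (whittle P c beta l) (thr l.+1).
Proof.
have adv_l := advantage_whittle c l; set w := whittle P c beta l in adv_l *.
have below (y : 'I_n) : (y <= l)%N -> 0 <= advantage c w y.
  by move/(advantage_antitone w); rewrite adv_l.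
have above (y : 'I_n) : (l <= y)%N -> advantage c w y <= 0.
  by move/(advantage_antitone w); rewrite adv_l.
by split; apply/optimal_thrP; split=> y y_l; [apply/below/ltnW | apply: above |
  apply: below | apply/above/ltnW].
Qed.

Lemma whittle_indifference (l x : 'I_n) :
  Dg P c beta (thr l) x + whittle P c beta l * Ng P beta (thr l) x =
  Dg P c beta (thr l.+1) x + whittle P c beta l * Ng P beta (thr l.+1) x.
Proof.
have [l_opt l1_opt] := whittle_optimal l.
by rewrite -!Jg_affine (optimal_Jg l_opt) (optimal_Jg l1_opt).
Qed.

Lemma whittle_formula (l x : 'I_n) :
  Ng P beta (thr l) x <> Ng P beta (thr l.+1) x ->
  whittle P c beta l =
    (Dg P c beta (thr l.+1) x - Dg P c beta (thr l) x) /
    (Ng P beta (thr l) x - Ng P beta (thr l.+1) x).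
Proof.
move=> /eqP; rewrite -subr_eq0 => N_neq; apply: (canRL (mulfK N_neq)).
by have := whittle_indifference l x; lra.
Qed.

Section ActivityAntitone.
Hypothesis Ng_antitone : forall (x : 'I_n) (l1 l2 : nat), (l1 <= l2 <= n)%N ->
  Ng P beta (thr l2) x <= Ng P beta (thr l1) x.

Lemma ell_mono lam1 lam2 : lam1 <= lam2 ->
  (ell P c beta lam1 <= ell P c beta lam2)%N.
Proof.
move=> lam12; rewrite leqNgt; apply/negP => ell21.
have := ell_optimal lam1; have := ell_optimal lam2; have := ell_le_n c lam1.
set L1 := ell P c beta lam1 in ell21 *; set L2 := ell P c beta lam2 in ell21 *.
move=> L1_le_n L2_opt L1_opt.
have N12 x : Ng P beta (thr L1) x <= Ng P beta (thr L2) x.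
  by apply: Ng_antitone; rewrite ltnW.
have [L1_opt2 _] := optimal_exchange lam12 N12 L1_opt L2_opt.
by have := ell_max L1_le_n L1_opt2; rewrite leqNgt ell21.
Qed.

Lemma indexable_of_antitone : indexable P c beta.
Proof.
move=> lam1 lam2 lam12 x; rewrite /= !Pi_advantage => adv1_pos.
rewrite ltNge; apply/negP => adv2_npos.
have [L1 [L1_le_n L1_opt L1_pos]] := exists_optimal_thr lam1.
have [L2 [_ L2_opt L2_pos]] := exists_optimal_thr lam2.
have x_L1 : (x < L1)%N by rewrite L1_pos.
have L2_x : (L2 <= x)%N by rewrite leqNgt L2_pos -leNgt.
have N21 y : Ng P beta (thr L1) y <= Ng P beta (thr L2) y.
  by apply: Ng_antitone; rewrite L1_le_n (leq_trans L2_x (ltnW x_L1)).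
have [_ /optimal_thrP[_ L2_adv]] := optimal_exchange lam12 N21 L1_opt L2_opt.
by have := L2_adv x L2_x; rewrite leNgt adv1_pos.
Qed.

End ActivityAntitone.

End Cost.

(* Charge one unit for passivity at the states >= l.  This cost satisfies D3
   and D4, costs nothing under thr l and something under thr l.+1 at l, so the
   indifference at the Whittle index of l forces the activities to differ. *)
Lemma Ng_thr_neq (l : 'I_n) : Ng P beta (thr l) l <> Ng P beta (thr l.+1) l.
Proof.
move=> N_eq; pose c2 (x : 'I_n) (a : bool) : R := if a then 0 else (l <= x)%N%:R.
have c2_D3 : D3 c2.
  move=> [] x y x_y //=; rewrite ler_nat; case: (leqP l x) => // l_x.
  by rewrite (leq_trans l_x x_y).
have c2_D4 : D4 c2.
  move=> x1 x2 [] [] x12 //= _; last by rewrite !subrr.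
  rewrite !sub0r lerN2 ler_nat.
  by case: (leqP l x1) => // l_x1; rewrite (leq_trans l_x1 x12).
have := whittle_indifference c2_D3 c2_D4 l l; rewrite N_eq => /addIr.
have -> : Dg P c2 beta (thr l) l = 0.
  apply: (@policy_fixpoint_unique (thr l) c2 _ (fun=> 0)) => [|x].
    exact: disc_fixpoint.
  by rewrite expect_cst /c2 /thr; case: leqP; rewrite mulr0 ?addr0 // => _; ring.
rewrite /Dg disc_fixpoint /c2 /thr ltnn leqnn /= mulr1; set E := expect _ _ _.
have : 0 <= beta * E by rewrite mulr_ge0 ?expect_ge // => y; apply: disc_ge0 => x [].
have := beta1_gt0.
lra.
Qed.

End Monotone.

End DiscountedMDP.

Theorem lemma5 (R : realType) (n : nat) (P : bool -> 'M[R]_n)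
  (c : 'I_n -> bool -> R) (beta : R) :
  0 < beta < 1 -> stochastic P ->
  D1 P -> D2 P -> D3 c -> D4 c ->
  (* 1. an optimal threshold policy exists for every lambda *)
  (forall lam : R, exists l : nat, (l <= n)%N /\ optimal P c beta lam (thr l)) /\
  (* 2. *)
  ((forall (x : 'I_n) (l1 l2 : nat), (l1 <= l2 <= n)%N ->
       Ng P beta (thr l2) x <= Ng P beta (thr l1) x) ->
   (forall lam1 lam2 : R, lam1 <= lam2 -> (ell P c beta lam1 <= ell P c beta lam2)%N) /\
   indexable P c beta /\
   (forall x y : 'I_n, (x <= y)%N -> whittle P c beta x <= whittle P c beta y) /\
   (forall l : 'I_n,
      (exists x : 'I_n, Ng P beta (thr l) x <> Ng P beta (thr l.+1) x) /\
      (forall x : 'I_n, Ng P beta (thr l) x <> Ng P beta (thr l.+1) x ->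
         whittle P c beta l =
           (Dg P c beta (thr l.+1) x - Dg P c beta (thr l) x) /
           (Ng P beta (thr l) x - Ng P beta (thr l.+1) x)))).
Proof.
move=> /andP[beta_gt0 beta_lt1] [P_ge0 P_sum1] P_D1 P_D2 c_D3 c_D4.
split=> [lam | Ng_antitone].
  have [L [L_le_n L_opt _]] :=
    exists_optimal_thr beta_gt0 beta_lt1 P_ge0 P_sum1 P_D1 P_D2 c_D3 c_D4 lam.
  by exists L.
split.
  exact: (ell_mono beta_gt0 beta_lt1 P_ge0 P_sum1 P_D1 P_D2 c_D3 c_D4 Ng_antitone).
split.
  exact: (indexable_of_antitone beta_gt0 beta_lt1 P_ge0 P_sum1 P_D1 P_D2 c_D3 c_D4
            Ng_antitone).
split; first exact: (whittle_mono beta_gt0 beta_lt1 P_ge0 P_sum1 P_D1 P_D2 c_D3 c_D4).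
move=> l; split.
  by exists l; apply: (Ng_thr_neq beta_gt0 beta_lt1 P_ge0 P_sum1 P_D1 P_D2).
exact: (whittle_formula beta_gt0 beta_lt1 P_ge0 P_sum1 P_D1 P_D2 c_D3 c_D4).
Qed.
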